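(* Let $G$ be a finite metabelian group and $N$ a normal subgroup of $G$. Let $B$ be an abelian subgroup of $N$ of maximal order among abelian subgroups of $N$. Then $G$ contains a normal abelian subgroup $C$ with $C\le\langle B^G\rangle\le N$ and $|C|=|B|$.
   Context: A group is metabelian if its derived subgroup $[G,G]$ is abelian. $\langle B^G\rangle$ denotes the normal closure of $B$ in $G$, i.e. the subgroup generated by all conjugates $g^{-1}Bg$, $g\in G$. *)

From mathcomp Require Import all_boot all_fingroup all_solvable.
Set Implicit Arguments. Unset Strict Implicit. Unset Printing Implicit Defensive.
Import GroupScope.
Open Scope group_scope.

Definition metabelian (gT : finGroupType) (G : {set gT}) : bool :=
  abelian G^`(1).

Definition normal_closure (gT : finGroupType) (B G : {set gT}) : {set gT} :=
  <<class_support B G>>.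

(* For an abelian subgroup X of N of maximal order, the quantity |C_B(M)| |M|
   does not decrease when M is replaced by <M, X>, because C_X(C_B(M)) C_B(M)
   is an abelian subgroup of N and so has order at most |B|.  Starting from
   M = B, where it equals |B|^2, and joining every conjugate of B gives
   |B|^2 <= |Z(<B^G>)| |<B^G>|.  Maximality of B also forces Z(<B^G>) <= B.
   Now <B^G> = B [B,G] with [B,G] <= G' abelian and normal in G, so
   C = [B,G] Z(<B^G>) is normal and abelian, and the two inequalities give
   |C| >= |B|; the reverse inequality is maximality once more. *)

From mathcomp Require Import all_boot all_fingroup all_solvable.

Set Implicit Arguments.
Unset Strict Implicit.
Unset Printing Implicit Defensive.
Import GroupScope.
Open Scope group_scope.

Section NormalClosure.

Variables (gT : finGroupType) (B G : {group gT}).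

Lemma sub_normal_closure : B \subset normal_closure B G.
Proof. exact: subset_trans (sub_class_support G B) (subset_gen _). Qed.

Lemma normal_closure_sub (N : {group gT}) :
  N <| G -> B \subset N -> normal_closure B G \subset N.
Proof.
by move=> /normal_norm nNG sBN; rewrite /normal_closure gen_subG class_support_sub_norm.
Qed.

Lemma normal_closure_mulR : normal_closure B G = B * [~: B, G].
Proof.
apply/eqP; rewrite eqEsubset; apply/andP; split.
  have nRB := commg_norml B G.
  rewrite /normal_closure -(norm_joinEl nRB) gen_subG /= (norm_joinEl nRB).
  apply/subsetP=> _ /imset2P[x g xB gG ->].
  by rewrite conjg_mulR mem_mulg // mem_commg.
rewrite mulG_subG sub_normal_closure /normal_closure gen_subG.
apply/subsetP=> _ /imset2P[x g xB gG ->].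
rewrite commgEl groupM ?groupV //; last exact: mem_gen (memJ_class_support xB gG).
exact: subsetP sub_normal_closure x xB.
Qed.

Lemma commR_sub_normal_closure : [~: B, G] \subset normal_closure B G.
Proof. by rewrite normal_closure_mulR mulG_subr. Qed.

Lemma commR_cent_center : [~: B, G] \subset 'C('Z(normal_closure B G)).
Proof.
by rewrite centsC (subset_trans (subsetIr _ _)) ?centS ?commR_sub_normal_closure.
Qed.

Hypothesis sBG : B \subset G.

Lemma normal_closure_normal : normal_closure B G <| G.
Proof.
rewrite /normal /normal_closure gen_subG class_support_sub_norm ?normG //.
exact/norms_gen/class_support_norm.
Qed.

Lemma commR_normal : [~: B, G] <| G.
Proof.
rewrite /normal commg_normr andbT (subset_trans (commg_sub B G)) //.
by rewrite join_subG sBG subxx.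
Qed.

End NormalClosure.

Section MaxAbelian.

Variables (gT : finGroupType) (N B : {group gT}).
Hypotheses (sBN : B \subset N) (abB : abelian B).
Hypothesis maxB :
  forall A : {group gT}, A \subset N -> abelian A -> (#|A| <= #|B|)%N.

Lemma max_abelian_centS (A : {group gT}) :
  A \subset N -> abelian A -> A \subset 'C(B) -> A \subset B.
Proof.
move=> sAN abA cAB.
have abBA : abelian (B <*> A) by rewrite abelianY abB abA cAB.
have sBAN : B <*> A \subset N by rewrite join_subG sBN.
have /eqP eqBA : B :==: B <*> A by rewrite eqEcard joing_subl (maxB sBAN abBA).
by rewrite eqBA joing_subr.
Qed.

Lemma card_cent_mul_le (K X : {group gT}) :
  K \subset B -> X \subset N -> abelian X ->
  (#|'C_X(K)| * #|K| <= #|B| * #|'C_K(X)|)%N.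
Proof.
move=> sKB sXN abX.
have cXK : 'C_X(K) \subset 'C(K) by apply: subsetIr.
have abXK : abelian ('C_X(K) <*> K).
  by rewrite abelianY (abelianS (subsetIl _ _) abX) (abelianS sKB abB) centsC.
have sXKN : 'C_X(K) <*> K \subset N.
  by rewrite join_subG (subset_trans (subsetIl _ _) sXN) (subset_trans sKB).
have := maxB sXKN abXK; rewrite /= cent_joinEl // => le_XK_B.
have sXKK : 'C_X(K) :&: K \subset 'C_K(X).
  by rewrite subsetI subsetIr !(subset_trans (subsetIl _ _)).
rewrite mul_cardG leq_mul //; exact: subset_leq_card.
Qed.

Lemma leq_card_centB_joinG (M X : {group gT}) :
  X \subset N -> abelian X -> #|X| = #|B| ->
  (#|'C_B(M)| * #|M| <= #|'C_B(M <*> X)| * #|M <*> X|)%N.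
Proof.
move=> sXN abX cardX; set K := 'C_B(M).
have -> : 'C_B(M <*> X) = 'C_K(X) by rewrite centY /K setIA.
have := card_cent_mul_le (K := [group of K]) (subsetIl _ _) sXN abX.
rewrite /= => le_cent.
have le_MX : (#|M :&: X| <= #|'C_X(K)|)%N.
  by rewrite subset_leq_card // setIC setIS // centsC subsetIr.
have le_join : (#|(M * X)%g| <= #|M <*> X|)%N.
  by rewrite subset_leq_card // mulG_subG joing_subl joing_subr.
have le_KMX : (#|K| * #|M| * #|M :&: X| <= #|'C_K(X)| * (#|M| * #|X|))%N.
  apply: leq_trans (leq_mul (leqnn _) le_MX) _.
  rewrite mulnAC [(#|M| * _)%N]mulnC mulnA cardX leq_mul //.
  by rewrite mulnC [(#|'C_K(X)| * _)%N]mulnC.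
rewrite -(leq_pmul2r (cardG_gt0 [group of M :&: X])) (leq_trans le_KMX) //.
by rewrite mul_cardG mulnA leq_mul // leq_mul.
Qed.

Variable G : {group gT}.
Hypothesis nNG : N <| G.

Lemma exists_join_conjugates (s : seq gT) : {subset s <= G} ->
  exists M : {group gT}, [/\ {in s, forall g, B :^ g \subset M},
    M \subset normal_closure B G & (#|B| * #|B| <= #|'C_B(M)| * #|M|)%N].
Proof.
elim: s => [|g s IHs] sG.
  by exists B; split; rewrite ?(setIidPl abB) ?sub_normal_closure.
have [|M [sBsM sMMc leBM]] := IHs.
  by move=> x sx; apply: sG; rewrite inE sx orbT.
have gG : g \in G by apply: sG; rewrite mem_head.
have sBgN : B :^ g \subset N by rewrite -(normsP (normal_norm nNG) g gG) conjSg.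
exists (M <*> (B :^ g))%G; split.
- move=> h /predU1P[-> | sh]; first exact: joing_subr.
  exact: subset_trans (sBsM h sh) (joing_subl _ _).
- rewrite join_subG sMMc /= (subset_trans _ (subset_gen _)) //.
  by rewrite class_supportEr (bigcup_sup g gG).
- by rewrite (leq_trans leBM) ?leq_card_centB_joinG ?abelianJ ?cardJg.
Qed.

Lemma leq_card_sqr_normal_closure :
  (#|B| * #|B| <= #|'C_B(normal_closure B G)| * #|normal_closure B G|)%N.
Proof.
have [|M [sBgM sMMc leBM]] := @exists_join_conjugates (enum G).
  by move=> g; rewrite mem_enum.
suff -> : normal_closure B G = M by [].
apply/eqP; rewrite eqEsubset /= {}sMMc andbT gen_subG class_supportEr.
by apply/bigcupsP=> g gG; rewrite sBgM ?mem_enum.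
Qed.

Lemma center_normal_closure_sub : 'Z(normal_closure B G) \subset B.
Proof.
apply: max_abelian_centS; rewrite ?center_abelian //.
  exact: subset_trans (center_sub _) (normal_closure_sub nNG sBN).
exact: subset_trans (subsetIr _ _) (centS (sub_normal_closure B G)).
Qed.

Lemma leq_card_commR_center :
  (#|B| <= #|[~: B, G] <*> 'Z(normal_closure B G)|)%N.
Proof.
set R := [~: B, G]; set Z := 'Z(normal_closure B G).
have ncE := normal_closure_mulR B G.
have le_b2 : (#|B| * #|B| <= #|Z| * #|(B * R)%g|)%N.
  apply: leq_trans (leq_card_sqr_normal_closure) _; rewrite -ncE leq_mul //.
  by rewrite subset_leq_card // setSI // sub_normal_closure.
have sRZ : R :&: Z \subset B :&: R.
  by rewrite setIC setSI // center_normal_closure_sub.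
have BR_gt0 : (0 < #|B :&: R|)%N by apply: cardG_gt0.
have le_bi : (#|B| * #|B :&: R| <= #|Z| * #|R|)%N.
  rewrite -(leq_pmul2l (cardG_gt0 B)) mulnA.
  apply: leq_trans (leq_mul le_b2 (leqnn _)) _.
  by rewrite -mulnA -mul_cardG mulnCA.
rewrite cent_joinEl ?commR_cent_center // -(leq_pmul2r BR_gt0) (leq_trans le_bi) //.
by rewrite mulnC mul_cardG leq_mul // subset_leq_card.
Qed.

End MaxAbelian.

Theorem mainTheorem19 (gT : finGroupType) (G N B : {group gT}) :
  metabelian G -> N <| G ->
  B \subset N -> abelian B ->
  (forall A : {group gT}, A \subset N -> abelian A -> #|A| <= #|B|)%N ->
  exists C : {group gT},
    [/\ C <| G, abelian C, C \subset normal_closure B G,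
        normal_closure B G \subset N & #|C| = #|B| ].
Proof.
move=> metG nNG sBN abB maxB.
have sBG := subset_trans sBN (normal_sub nNG).
have nZG : 'Z(normal_closure B G) <| G.
  exact: char_normal_trans (center_char _) (normal_closure_normal sBG).
have abR : abelian [~: B, G] by apply: abelianS metG; apply: commgSS.
exists ([~: B, G] <*> 'Z(normal_closure B G))%G.
have abC : abelian ([~: B, G] <*> 'Z(normal_closure B G)).
  by rewrite abelianY abR center_abelian centsC commR_cent_center.
have sCnc : [~: B, G] <*> 'Z(normal_closure B G) \subset normal_closure B G.
  by rewrite join_subG commR_sub_normal_closure center_sub.
have sncN := normal_closure_sub nNG sBN.
split=> //; first by rewrite normalY ?commR_normal.
apply/eqP; rewrite eqn_leq maxB ?(subset_trans sCnc) //=.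
by have := leq_card_commR_center sBN abB maxB nNG.
Qed.
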